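(* Let $\varphi=(1+\sqrt5)/2$. There is an absolute constant $c>0$ such that every $n$-vertex directed tree $T$ whose longest directed path has length $\ell\ge 1$ has span at most $c\cdot \ell\cdot n^{\log_2\varphi}$; that is, the span of $T$ is in $O(\ell\cdot n^{\log_2\varphi})\subseteq O(\ell\cdot n^{0.695})$.
   Context: A directed tree is a DAG (directed acyclic graph) whose underlying undirected graph is a tree. The length of a directed path is its number of edges. An upward-planar layered drawing of a DAG $G$ maps each vertex $v$ to a point in the plane whose y-coordinate $y(v)$ is an integer, and each edge $(u,v)$ (directed from tail $u$ to head $v$) to a strictly y-monotone curve going upward from $u$ to $v$ (so $y(u)<y(v)$), such that no two edges intersect except at common endpoints. The span of an edge $(u,v)$ in such a drawing $\Gamma$ is $y(v)-y(u)$; the span of $\Gamma$ is the maximum span of its edges; the span of an upward-planar DAG is the minimum span over all its upward-planar layered drawings (no embedding prescribed). *)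

From mathcomp Require Import all_boot.
From Stdlib Require Import Reals ZArith.
Set Implicit Arguments. Unset Strict Implicit. Unset Printing Implicit Defensive.

Definition undirected n (E : rel 'I_n) : rel 'I_n := fun x y => E x y || E y x.

Definition directed_tree n (E : rel 'I_n) : Prop :=
  0 < n /\
  (forall x y, E x y -> ~~ connect E y x) /\
  (forall x y, E x y -> ~~ E y x) /\
  (forall x y, connect (undirected E) x y) /\
  #|[set p : 'I_n * 'I_n | E p.1 p.2]| = n.-1.

(* The longest directed path of E has length (number of edges) l.
   A directed path from x is x :: s with consecutive E-edges; its length is size s. *)
Definition longest_path_length n (E : rel 'I_n) (l : nat) : Prop :=
  (exists (x : 'I_n) (s : seq 'I_n), path E x s /\ size s = l) /\
  (forall (x : 'I_n) (s : seq 'I_n), path E x s -> size s <= l).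

Definition on_curve (cx cy : R -> R) (P : R * R) : Prop :=
  exists t : R, (0 <= t <= 1)%R /\ cx t = fst P /\ cy t = snd P.

Definition upward_planar_layered_drawing n (E : rel 'I_n)
    (X : 'I_n -> R) (Y : 'I_n -> Z) (gx gy : 'I_n -> 'I_n -> R -> R) : Prop :=
  (forall u v : 'I_n, (X u, IZR (Y u)) = (X v, IZR (Y v)) -> u = v) /\
  (forall u v : 'I_n, E u v ->
     continuity (gx u v) /\ continuity (gy u v) /\
     gx u v 0%R = X u /\ gy u v 0%R = IZR (Y u) /\
     gx u v 1%R = X v /\ gy u v 1%R = IZR (Y v) /\
     (forall s t : R, (0 <= s)%R -> (s < t)%R -> (t <= 1)%R ->
        (gy u v s < gy u v t)%R)) /\
  (forall u v w : 'I_n, E u v -> w <> u -> w <> v ->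
     ~ on_curve (gx u v) (gy u v) (X w, IZR (Y w))) /\
  (forall u v u' v' : 'I_n, E u v -> E u' v' -> (u, v) <> (u', v') ->
     forall P : R * R, on_curve (gx u v) (gy u v) P -> on_curve (gx u' v') (gy u' v') P ->
     exists w : 'I_n, (w = u \/ w = v) /\ (w = u' \/ w = v') /\ P = (X w, IZR (Y w))).

Definition drawing_span_le n (E : rel 'I_n) (Y : 'I_n -> Z) (b : R) : Prop :=
  forall u v : 'I_n, E u v -> (IZR (Y v - Y u) <= b)%R.

Definition golden_ratio : R := ((1 + sqrt 5) / 2)%R.

(* Root the tree and split it into heavy paths, a vertex continuing the path of its parent iff
   it is the child with the largest subtree. A vertex v is drawn on layer offset(v) + h(v), where
   h(v) is the length of a longest directed path ending at v and the offset is constant along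
   heavy paths, so every edge of a heavy path points upward and has span at most l. The subtree
   of a light child x hanging from a heavy path is placed entirely above the layer of its parent
   if the edge points to x and entirely below otherwise, in a band of about
   2 (l + 4) |T_x|^alpha layers, alpha = log2 phi. The band of a heavy path of size m holds the
   l + 1 layers of the path and the bands of the largest subtrees hanging above and below it.
   Light subtrees are at most half of their parent's, so these sizes a, b satisfy 2a <= m and
   2b + a <= m (up to symmetry), and concavity of x^alpha with 2^alpha = phi and
   1/phi + 1/phi^2 = 1 gives a^alpha + b^alpha <= m^alpha: the bands nest.
   The x-coordinate of a vertex is its rank in a preorder visiting heavy children last; an edge
   runs half a unit left of its child vertex between the two layers, and since every light
   subtree sits on one side of its parent's layer, no edge meets another edge or a vertex. *)

From Stdlib Require Import Reals ZArith Lra Lia.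
From mathcomp Require Import all_boot zify.
(* [zify] loads ssralg, whose [ring_scope] would otherwise take over the [%R] key. *)
Delimit Scope R_scope with R.
Set Implicit Arguments. Unset Strict Implicit. Unset Printing Implicit Defensive.

Lemma bigmax_attained (I : finType) (P : pred I) (F : I -> nat) :
  \max_(i | P i) F i = 0 \/ exists2 i, P i & \max_(i | P i) F i = F i.
Proof.
case: (pickP P) => [i0 Pi0 | noP]; last by left; rewrite big_pred0.
by right; exists [arg max_(i > i0 | P i) F i]; [case: arg_maxnP | apply: bigmax_eq_arg].
Qed.

Section GoldenExponent.
Local Open Scope R_scope.

Definition alpha : R := ln golden_ratio / ln 2.

Lemma golden_ratio_bounds : 1 < golden_ratio < 2.
Proof.
have sqrt5_gt2 : 2 < sqrt 5 by rewrite -(sqrt_square 2); [apply: sqrt_lt_1|]; lra.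
have sqrt5_lt3 : sqrt 5 < 3 by rewrite -(sqrt_square 3); [apply: sqrt_lt_1|]; lra.
rewrite /golden_ratio; lra.
Qed.

Lemma golden_ratio_sq : golden_ratio * golden_ratio = golden_ratio + 1.
Proof.
have sqrt5_sq : sqrt 5 * sqrt 5 = 5 by apply: sqrt_sqrt; lra.
rewrite /golden_ratio; nra.
Qed.

Lemma alpha_bounds : 0 < alpha < 1.
Proof.
have [phi_gt1 phi_lt2] := golden_ratio_bounds; have ln2_gt0 : 0 < ln 2 by have := ln_lt_2; lra.
have ln_phi_gt0 : 0 < ln golden_ratio by rewrite -ln_1; apply: ln_increasing; lra.
have ln_phi_lt : ln golden_ratio < ln 2 by apply: ln_increasing; lra.
rewrite /alpha; split; first by apply: Rdiv_lt_0_compat; lra.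
by apply: (Rmult_lt_reg_r (ln 2)) => //; rewrite /Rdiv Rmult_assoc Rinv_l; lra.
Qed.

Lemma Rpower_half_alpha x : 0 < x -> Rpower (x / 2) alpha = Rpower x alpha / golden_ratio.
Proof.
move=> x_gt0; have [phi_gt1 _] := golden_ratio_bounds; have ln2_gt0 : 0 < ln 2 by have := ln_lt_2; lra.
have two_alpha : Rpower 2 alpha = golden_ratio.
  by rewrite /Rpower /alpha -[X in exp X]/(ln golden_ratio / ln 2 * ln 2) Rmult_assoc
       Rinv_l ?Rmult_1_r ?exp_ln //; lra.
rewrite -[in RHS](_ : x / 2 * 2 = x); last by field.
rewrite -Rpower_mult_distr ?two_alpha; try lra.
by field; lra.
Qed.

Lemma ln_le_sub1 x : 0 < x -> ln x <= x - 1.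
Proof. by move=> x_gt0; have := exp_ineq1_le (ln x); rewrite exp_ln //; lra. Qed.

Lemma Rpower_le_tangent u a : 0 < u -> 0 <= a <= 1 -> Rpower u a <= 1 + a * (u - 1).
Proof.
move=> u_gt0 [a_ge0 a_le1]; set s := 1 + a * (u - 1).
have s_gt0 : 0 < s by rewrite /s; nra.
(* Concavity of ln: a ln (u / s) + (1 - a) ln (1 / s) <= a (u / s - 1) + (1 - a) (1 / s - 1) = 0. *)
have ln_us := ln_le_sub1 (Rdiv_lt_0_compat _ _ u_gt0 s_gt0).
have ln_s := ln_le_sub1 (Rinv_0_lt_compat _ s_gt0).
rewrite /Rdiv ln_mult ?ln_Rinv in ln_us; try by [|apply: Rinv_0_lt_compat].
rewrite ln_Rinv // in ln_s.
have chord : a * (u / s - 1) + (1 - a) * (/ s - 1) = 0.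
  by rewrite /s; field; exact: Rgt_not_eq _ _ s_gt0.
have ln_le : a * ln u <= ln s.
  have a1 : 0 <= 1 - a by lra.
  have := Rmult_le_compat_l a _ _ a_ge0 ln_us; have := Rmult_le_compat_l (1 - a) _ _ a1 ln_s.
  rewrite /Rdiv in chord; lra.
rewrite /Rpower -[X in _ <= X](exp_ln s) //.
case: (Rle_lt_or_eq_dec _ _ ln_le) => [lt | ->]; last exact: Rle_refl.
by left; apply: exp_increasing.
Qed.

(* With u = 2a/m, concavity gives a^alpha <= (m/2)^alpha (1 + alpha (u - 1)) and
   b^alpha <= ((m - a)/2)^alpha <= (m/4)^alpha (1 + alpha (1 - u)); as (m/2)^alpha = m^alpha/phi,
   (m/4)^alpha = m^alpha/phi^2 and 1/phi + 1/phi^2 = 1, the sum is at most m^alpha since u <= 1. *)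
Lemma Rpower_golden_split a b m : 0 < a -> 0 < b -> 2 * a <= m -> 2 * b + a <= m ->
  Rpower a alpha + Rpower b alpha <= Rpower m alpha.
Proof.
move=> a_gt0 b_gt0 am bm; have m_gt0 : 0 < m by lra.
have [alpha_gt0 alpha_lt1] := alpha_bounds; have [phi_gt1 _] := golden_ratio_bounds.
set u := 2 * a / m; set q := Rpower m alpha / (golden_ratio * golden_ratio).
have u01 : 0 < u <= 1.
  rewrite /u; split; first by apply: Rdiv_lt_0_compat; lra.
  by apply: (Rmult_le_reg_r m) => //; rewrite /Rdiv Rmult_assoc Rinv_l; lra.
have q_ge0 : 0 <= q.
  by apply: Rmult_le_pos; [left; apply: exp_pos | left; apply: Rinv_0_lt_compat; nra].
have quarter : Rpower (m / 2 / 2) alpha = q.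
  by rewrite !Rpower_half_alpha /q; try field; lra.
have pa : Rpower a alpha <= q * golden_ratio * (1 + alpha * (u - 1)).
  have -> : a = m / 2 * u by rewrite /u; field; lra.
  rewrite -Rpower_mult_distr; try lra.
  have -> : q * golden_ratio = Rpower (m / 2) alpha by rewrite Rpower_half_alpha // /q; field; lra.
  apply: Rmult_le_compat_l; first by left; apply: exp_pos.
  by apply: Rpower_le_tangent; lra.
have pb : Rpower b alpha <= q * (1 + alpha * (1 - u)).
  apply: Rle_trans (_ : Rpower ((m - a) / 2) alpha <= _).
    by apply: Rle_Rpower_l; lra.
  have -> : (m - a) / 2 = m / 2 / 2 * (2 - u) by rewrite /u; field; lra.
  rewrite -Rpower_mult_distr ?quarter; try lra.
  apply: Rmult_le_compat_l => //.
  have := @Rpower_le_tangent (2 - u) alpha; lra.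
have -> : Rpower m alpha = q * (golden_ratio + 1).
  by rewrite -golden_ratio_sq /q; field; lra.
have : 0 <= q * (alpha * (1 - u) * (golden_ratio - 1)).
  by apply: Rmult_le_pos => //; apply: Rmult_le_pos; [apply: Rmult_le_pos|]; lra.
nra.
Qed.

End GoldenExponent.

Definition golden_split (a b m : nat) : bool :=
  (2 * a <= m) && (2 * b + a <= m) || (2 * b <= m) && (2 * a + b <= m).

Lemma golden_split_sym a b m : golden_split a b m = golden_split b a m.
Proof. by rewrite /golden_split orbC. Qed.

Lemma golden_split_Rpower a b m : 0 < a -> 0 < b -> golden_split a b m ->
  (Rpower (INR a) alpha + Rpower (INR b) alpha <= Rpower (INR m) alpha)%R.
Proof.
have INR_le i j : i <= j -> (INR i <= INR j)%R by move/leP; apply: le_INR.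
move=> /ltP/lt_0_INR a_gt0 /ltP/lt_0_INR b_gt0.
case/orP=> /andP [/INR_le split1 /INR_le split2]; rewrite ?mult_INR ?plus_INR /= in split1 split2.
- by apply: Rpower_golden_split; lra.
- by rewrite Rplus_comm; apply: Rpower_golden_split; lra.
Qed.

Section RootedTree.
Variables (n : nat) (U : rel 'I_n) (root : 'I_n).
Hypothesis U_connected : forall v, connect U root v.

Definition reachable_in (v : 'I_n) (k : nat) : bool :=
  [exists s : k.-tuple 'I_n, path U root s && (last root s == v)].

Lemma reachable_in_exists v : exists k, reachable_in v k.
Proof.
have /connectP [s s_path ->] := U_connected v.
by exists (size s); apply/existsP; exists (in_tuple s); rewrite s_path eqxx.
Qed.

Definition depth (v : 'I_n) : nat := ex_minn (reachable_in_exists v).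

Lemma depthP v : reachable_in v (depth v).
Proof. by rewrite /depth; case: ex_minnP. Qed.

Lemma depth_min v k : reachable_in v k -> depth v <= k.
Proof. by rewrite /depth; case: ex_minnP => m _; apply. Qed.

Lemma depth_root : depth root = 0.
Proof.
apply/eqP; rewrite -leqn0; apply: depth_min.
by apply/existsP; exists [tuple]; rewrite /= eqxx.
Qed.

Lemma depth_eq0 v : depth v = 0 -> v = root.
Proof.
by have := depthP v => /[swap] -> /existsP [s /andP [_ /eqP <-]]; rewrite tuple0.
Qed.

Lemma depth_gt0 v : v != root -> 0 < depth v.
Proof. by move=> v_root; rewrite lt0n; apply: contra v_root => /eqP/depth_eq0 ->. Qed.

Lemma depth_adj u v : U u v -> depth v <= (depth u).+1.
Proof.
move=> uv; apply: depth_min; have /existsP [s /andP [s_path /eqP s_last]] := depthP u.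
have size_s : size (rcons s v) == (depth u).+1 by rewrite size_rcons size_tuple.
apply/existsP; exists (Tuple size_s).
by rewrite /= rcons_path s_path s_last uv last_rcons eqxx.
Qed.

Definition parent (v : 'I_n) : 'I_n :=
  if v == root then root else odflt root [pick p | U p v && (depth p < depth v)].

Lemma parent_spec v : v != root -> U (parent v) v /\ depth (parent v) = (depth v).-1.
Proof.
move=> v_root; rewrite /parent (negbTE v_root).
case: pickP => [p /andP [pv lt_pv] | no_parent] /=.
  by split=> //; have := depth_adj pv; lia.
have /existsP [s /andP [s_path /eqP s_last]] := depthP v.
have := depth_gt0 v_root; case/lastP: (tval s) s_path s_last (size_tuple s) => [|s' p] /=.
  by move=> _ _ <-.
rewrite rcons_path last_rcons size_rcons => /andP [s'_path pv] p_v size_s' _; subst v.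
have : depth (last root s') <= size s'.
  by apply: depth_min; apply/existsP; exists (in_tuple s'); rewrite /= s'_path eqxx.
by have := no_parent (last root s'); rewrite pv /= -size_s' => /negbT; lia.
Qed.

Lemma depth_parent v : depth (parent v) = (depth v).-1.
Proof.
case: (eqVneq v root) => [-> | /parent_spec [] //].
by rewrite /parent eqxx depth_root.
Qed.

Section ParentRecursion.
Variables (T : Type) (base : T) (step : 'I_n -> T -> T).

Fixpoint parent_rec_fuel (k : nat) (v : 'I_n) : T :=
  if k is k'.+1 then step v (parent_rec_fuel k' (parent v)) else base.

Definition parent_rec (v : 'I_n) : T := parent_rec_fuel (depth v) v.

Lemma parent_recE v : parent_rec v = if v == root then base else step v (parent_rec (parent v)).
Proof.
rewrite /parent_rec depth_parent; case: eqVneq => [-> | v_root]; first by rewrite depth_root.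
by have := depth_gt0 v_root; case: (depth v).
Qed.

End ParentRecursion.

Lemma parent_ind (P : 'I_n -> Prop) :
  (forall v, (v != root -> P (parent v)) -> P v) -> forall v, P v.
Proof.
move=> IH v; move: {2}(depth v) (leqnn (depth v)) => k.
elim: k v => [|k IHk] v dv; apply: IH => v_root; first by have := depth_gt0 v_root; lia.
by apply: IHk; rewrite depth_parent; lia.
Qed.

Definition ancestor (v w : 'I_n) : bool :=
  (depth v <= depth w) && (iter (depth w - depth v) parent w == v).

Lemma ancestorP v w :
  reflect (depth v <= depth w /\ iter (depth w - depth v) parent w = v) (ancestor v w).
Proof. by apply: (iffP andP) => [[-> /eqP ->] | [-> ->]]. Qed.

Lemma ancestor_refl v : ancestor v v.
Proof. by rewrite /ancestor leqnn subnn eqxx. Qed.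

Lemma ancestor_depth v w : ancestor v w -> depth v <= depth w.
Proof. by case/andP. Qed.

Lemma ancestor_depth_eq v w : ancestor v w -> depth v = depth w -> v = w.
Proof. by move=> /ancestorP [_ iter_w] dvw; rewrite -iter_w dvw subnn. Qed.

Lemma depth_iter_parent k w : depth (iter k parent w) = depth w - k.
Proof. by elim: k => [|k IHk] /=; rewrite ?subn0 // depth_parent IHk subnS. Qed.

Lemma ancestor_trans u v w : ancestor u v -> ancestor v w -> ancestor u w.
Proof.
move=> /ancestorP [uv vu] /ancestorP [vw wv]; apply/ancestorP; split; first lia.
have -> : depth w - depth u = (depth v - depth u) + (depth w - depth v) by lia.
by rewrite iterD wv vu.
Qed.

Lemma ancestor_parent w : ancestor (parent w) w.
Proof.
apply/ancestorP; rewrite depth_parent; split; first lia.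
case: (eqVneq w root) => [-> | w_root]; first by rewrite depth_root /parent eqxx.
by have -> : depth w - (depth w).-1 = 1 by have := depth_gt0 w_root; lia.
Qed.

Lemma ancestor_root w : ancestor root w.
Proof.
apply/ancestorP; rewrite depth_root subn0; split=> //.
by apply: depth_eq0; rewrite depth_iter_parent subnn.
Qed.

Lemma ancestor_parent_r v w : ancestor v w -> w != v -> ancestor v (parent w).
Proof.
move=> vw wv; have /ancestorP [le_vw iter_w] := vw.
have lt_vw : depth v < depth w.
  by rewrite ltn_neqAle le_vw andbT; apply: contra wv => /eqP/(ancestor_depth_eq vw) ->.
apply/ancestorP; rewrite depth_parent; split; first lia.
rewrite -[RHS]iter_w; have -> : depth w - depth v = ((depth w).-1 - depth v).+1 by lia.
by rewrite iterSr.
Qed.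

Lemma ancestor_same_depth a b w : ancestor a w -> ancestor b w -> depth a = depth b -> a = b.
Proof. by move=> /ancestorP [_ iter_a] /ancestorP [_ iter_b] dab; rewrite -iter_a -iter_b dab. Qed.

Lemma ancestor_total a b w : ancestor a w -> ancestor b w -> ancestor a b || ancestor b a.
Proof.
wlog le_ab : a b / depth a <= depth b.
  move=> IH aw bw; case: (leqP (depth a) (depth b)) => [/IH | /ltnW /IH]; first exact.
  by move/(_ bw aw); rewrite orbC.
move=> /ancestorP [aw iter_a] /ancestorP [bw iter_b]; apply/orP; left; apply/ancestorP.
split=> //; rewrite -[RHS]iter_a.
have -> : depth w - depth a = (depth b - depth a) + (depth w - depth b) by lia.
by rewrite iterD iter_b.
Qed.

Definition child (p c : 'I_n) : bool := (c != root) && (parent c == p).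

Lemma child_depth p c : child p c -> depth c = (depth p).+1.
Proof. by case/andP=> c_root /eqP <-; rewrite depth_parent; have := depth_gt0 c_root; lia. Qed.

Lemma child_ancestor p c : child p c -> ancestor p c.
Proof. by case/andP=> _ /eqP <-; apply: ancestor_parent. Qed.

Lemma ancestor_child v w : ancestor v w -> w != v -> exists2 c, child v c & ancestor c w.
Proof.
move=> vw wv; have /ancestorP [le_vw iter_w] := vw.
have lt_vw : depth v < depth w.
  by rewrite ltn_neqAle le_vw andbT; apply: contra wv => /eqP/(ancestor_depth_eq vw) ->.
exists (iter (depth w - depth v).-1 parent w).
  apply/andP; split; last by rewrite -iterS prednK ?subn_gt0 // iter_w.
  by apply/eqP => c_root; have := depth_iter_parent (depth w - depth v).-1 w;
    rewrite c_root depth_root; lia.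
by apply/ancestorP; rewrite depth_iter_parent; split; [lia | congr iter; lia].
Qed.

Lemma child_ancestor_uniq p c1 c2 w :
  child p c1 -> child p c2 -> ancestor c1 w -> ancestor c2 w -> c1 = c2.
Proof.
move=> pc1 pc2 c1w c2w; apply: (ancestor_same_depth c1w c2w).
by rewrite (child_depth pc1) (child_depth pc2).
Qed.

Definition subtree (v : 'I_n) : {set 'I_n} := [set w | ancestor v w].
Definition subtree_size (v : 'I_n) : nat := #|subtree v|.

Lemma subtree_size_gt0 v : 0 < subtree_size v.
Proof. by apply/card_gt0P; exists v; rewrite inE ancestor_refl. Qed.

Lemma subtree_size_le_n v : subtree_size v <= n.
Proof. by rewrite -[n]card_ord max_card. Qed.

Lemma subtree_size_le u v : ancestor u v -> subtree_size v <= subtree_size u.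
Proof.
by move=> uv; apply/subset_leq_card/subsetP => w; rewrite !inE; apply: ancestor_trans.
Qed.

Lemma sum_children_size_lt v (P : pred 'I_n) :
  (forall c, P c -> child v c) -> \sum_(c | P c) subtree_size c < subtree_size v.
Proof.
move=> P_child.
have size_sum u : subtree_size u = \sum_w (ancestor u w : nat).
  by rewrite /subtree_size -sum1_card big_mkcond; apply: eq_bigr => w _; rewrite inE.
rewrite (eq_bigr _ (fun c _ => size_sum c)) exchange_big size_sum [X in _ < X](bigD1 v) //=.
rewrite ancestor_refl add1n ltnS [X in _ <= X]big_mkcond; apply: leq_sum => w _ /=.
case: (pickP (fun c => P c && ancestor c w)) => [c /andP [Pc cw] | no_c]; last first.
  by rewrite big1 // => c Pc; have := no_c c; rewrite /= Pc /= => ->.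
have vc := P_child _ Pc; rewrite (bigD1 c) //= cw big1 => [|c' /andP [Pc' c'c]]; last first.
  case: (boolP (ancestor c' w)) => //= c'w.
  by rewrite (child_ancestor_uniq (P_child _ Pc') vc c'w cw) eqxx in c'c.
rewrite (ancestor_trans (child_ancestor vc) cw) addn0.
by case: eqVneq => // wv; have := ancestor_depth cw; rewrite wv (child_depth vc); lia.
Qed.

Lemma children_size_lt p a b :
  child p a -> child p b -> a != b -> subtree_size a + subtree_size b < subtree_size p.
Proof.
move=> pa pb ab; have := @sum_children_size_lt p (mem [:: a; b]).
rewrite -big_uniq /= ?inE ?ab // !big_cons big_nil addn0; apply=> c.
by rewrite !inE => /orP [] /eqP ->.
Qed.

Definition heavy (p : 'I_n) : 'I_n :=
  if [pick c | child p c] is Some c0 then [arg max_(c > c0 | child p c) subtree_size c] else p.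

Lemma heavy_spec p c : child p c -> child p (heavy p) /\ subtree_size c <= subtree_size (heavy p).
Proof.
move=> pc; rewrite /heavy; case: pickP => [c0 pc0 | no_child]; last by have := no_child c; rewrite pc.
by case: arg_maxnP => // h ph max_h; split=> //; apply: max_h.
Qed.

Lemma light_child_size p c : child p c -> c != heavy p -> 2 * subtree_size c < subtree_size p.
Proof.
move=> pc c_light; have [ph le_ch] := heavy_spec pc.
by have := children_size_lt pc ph c_light; lia.
Qed.

Definition heavy_edge (v : 'I_n) : bool := (v != root) && (heavy (parent v) == v).

(* Orders siblings by index, except that the heavy child comes last. *)
Definition sibling_key (s : 'I_n) : nat := (s == heavy (parent s)) * n + s.

Lemma sibling_key_inj p a b : child p a -> child p b -> sibling_key a = sibling_key b -> a = b.
Proof.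
move=> /andP [_ /eqP pa] /andP [_ /eqP pb]; rewrite /sibling_key pa pb.
have := ltn_ord a; have := ltn_ord b.
by case: (a == heavy p); case: (b == heavy p) => /= ? ? ?; apply: val_inj => /=; lia.
Qed.

Lemma sibling_key_heavy p a : child p a -> a != heavy p -> sibling_key a < sibling_key (heavy p).
Proof.
move=> pa a_light; have [/andP [_ /eqP ph] _] := heavy_spec pa.
move: pa => /andP [_ /eqP pa]; rewrite /sibling_key pa ph eqxx (negbTE a_light).
by have := ltn_ord a; rewrite /=; lia.
Qed.

Definition preorder : 'I_n -> nat := parent_rec 0 (fun v pre_parent =>
  pre_parent + 1 + \sum_(s | child (parent v) s && (sibling_key s < sibling_key v)) subtree_size s).

Lemma preorder_child p c : child p c ->
  preorder c = preorder p + 1 + \sum_(s | child p s && (sibling_key s < sibling_key c)) subtree_size s.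
Proof. by case/andP=> c_root /eqP pc; rewrite /preorder parent_recE (negbTE c_root) pc. Qed.

Lemma preorder_child_lt p c : child p c -> preorder p < preorder c.
Proof. by move/preorder_child ->; lia. Qed.

Lemma preorder_end p c : child p c -> preorder c + subtree_size c =
  preorder p + 1 + \sum_(s | child p s && (sibling_key s <= sibling_key c)) subtree_size s.
Proof.
move=> pc; rewrite (preorder_child pc) -!addnA; congr (_ + (_ + _)).
rewrite [RHS](bigD1 c) /= ?pc ?leqnn // addnC; congr (_ + _); apply: eq_bigl => s.
case: (boolP (child p s)) => //= ps.
have key_neq : (sibling_key s != sibling_key c) = (s != c).
  by apply/idP/idP; apply: contra => /eqP; [move=> -> | move/(sibling_key_inj ps pc) ->].
by rewrite ltn_neqAle key_neq andbC.
Qed.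

Lemma preorder_child_end p c : child p c -> preorder c + subtree_size c <= preorder p + subtree_size p.
Proof.
move=> pc; rewrite (preorder_end pc) -addnA leq_add2l add1n.
by apply: sum_children_size_lt => s /andP [].
Qed.

Lemma preorder_sibling p a b : child p a -> child p b -> sibling_key a < sibling_key b ->
  preorder a + subtree_size a <= preorder b.
Proof.
move=> pa pb lt_ab; rewrite (preorder_end pa) (preorder_child pb) leq_add2l.
rewrite big_mkcond [X in _ <= X]big_mkcond; apply: leq_sum => s _.
by case: (child p s) => //=; case: (leqP (sibling_key s) (sibling_key a)) => // le_sa;
  rewrite (leq_ltn_trans le_sa lt_ab).
Qed.

Lemma proper_descendant_neq_root v w : ancestor v w -> w != v -> w != root.
Proof.
move=> vw; apply: contra_neq => w_root; rewrite w_root in vw *; apply/esym/depth_eq0.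
by have := ancestor_depth vw; rewrite depth_root; lia.
Qed.

Lemma child_parent w : w != root -> child (parent w) w.
Proof. by move=> w_root; rewrite /child w_root eqxx. Qed.

Lemma preorder_subtree v w : ancestor v w ->
  preorder v <= preorder w /\ preorder w + subtree_size w <= preorder v + subtree_size v.
Proof.
elim/parent_ind: w => w IH vw; case: (eqVneq w v) => [-> | wv]; first by split.
have w_root := proper_descendant_neq_root vw wv.
have [IH1 IH2] := IH w_root (ancestor_parent_r vw wv); have pw := child_parent w_root.
by have := preorder_child_lt pw; have := preorder_child_end pw; lia.
Qed.

Lemma preorder_range v w : ancestor v w -> preorder v <= preorder w < preorder v + subtree_size v.
Proof. by move/preorder_subtree; have := subtree_size_gt0 w; lia. Qed.

Lemma preorder_below v w : ancestor v w -> w != v -> preorder v < preorder w.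
Proof.
move=> vw wv; have [c vc cw] := ancestor_child vw wv.
by have := preorder_child_lt vc; have := preorder_range cw; lia.
Qed.

Lemma preorder_siblings_disjoint p c1 c2 w1 w2 : child p c1 -> child p c2 -> c1 != c2 ->
  ancestor c1 w1 -> ancestor c2 w2 -> preorder w1 != preorder w2.
Proof.
wlog lt_key : c1 c2 w1 w2 / sibling_key c1 < sibling_key c2.
  move=> wlog_lt pc1 pc2 c12 c1w1 c2w2.
  have : sibling_key c1 != sibling_key c2.
    by apply: contra c12 => /eqP/(sibling_key_inj pc1 pc2) ->.
  rewrite neq_ltn => /orP [lt12 | lt21]; first exact: (wlog_lt c1 c2).
  by rewrite eq_sym; apply: (wlog_lt c2 c1) => //; rewrite eq_sym.
move=> pc1 pc2 _ c1w1 c2w2; have := preorder_sibling pc1 pc2 lt_key.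
by have := preorder_range c1w1; have := preorder_range c2w2; lia.
Qed.

Lemma subtree_size_child_lt p c : child p c -> subtree_size c < subtree_size p.
Proof.
move=> pc; have := @sum_children_size_lt p (pred1 c).
by rewrite big_pred1_eq; apply=> _ /eqP ->.
Qed.

Lemma preorder_inj : injective preorder.
Proof.
suff inj_in k v : subtree_size v <= k -> {in subtree v &, injective preorder}.
  by move=> w1 w2; apply: (inj_in n root); rewrite ?subtree_size_le_n ?inE ?ancestor_root.
elim: k v => [|k IHk] v size_v w1 w2; rewrite !inE => vw1 vw2 eq_pre.
  by have := subtree_size_gt0 v; lia.
case: (eqVneq w1 v) => [w1v | w1v]; case: (eqVneq w2 v) => [w2v | w2v].
- by rewrite w1v w2v.
- by have := preorder_below vw2 w2v; rewrite -eq_pre w1v ltnn.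
- by have := preorder_below vw1 w1v; rewrite eq_pre w2v ltnn.
have [c1 vc1 c1w1] := ancestor_child vw1 w1v; have [c2 vc2 c2w2] := ancestor_child vw2 w2v.
case: (eqVneq c1 c2) => [eq_c | c12]; last first.
  by have := preorder_siblings_disjoint vc1 vc2 c12 c1w1 c2w2; rewrite eq_pre eqxx.
subst c2; apply: (IHk c1); rewrite ?inE //.
by have := subtree_size_child_lt vc1; lia.
Qed.

Lemma ancestor_of_preorder q c :
  preorder q <= preorder c < preorder q + subtree_size q -> ancestor q c.
Proof.
move=> range_c; set s := [seq preorder w | w <- enum (subtree q)].
have uniq_s : uniq s by rewrite map_inj_uniq ?enum_uniq //; apply: preorder_inj.
have sub_s : {subset s <= iota (preorder q) (subtree_size q)}.
  by move=> i /mapP [w]; rewrite mem_enum inE => /preorder_range ? ->; rewrite mem_iota.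
have size_s : size (iota (preorder q) (subtree_size q)) <= size s.
  by rewrite size_iota size_map -cardE.
have [_ eq_s] := uniq_min_size uniq_s sub_s size_s.
have : preorder c \in s by rewrite eq_s mem_iota.
by case/mapP=> w; rewrite mem_enum inE => qw /preorder_inj ->.
Qed.

Lemma preorder_between q d c : child q d -> preorder q < preorder c < preorder d ->
  exists2 d', child q d' & ancestor d' c /\ sibling_key d' < sibling_key d.
Proof.
move=> qd /andP [qc cd]; have := preorder_range (child_ancestor qd).
move=> /andP [_ end_d]; have := subtree_size_gt0 d => size_d.
have qc' : ancestor q c by apply: ancestor_of_preorder; lia.
have cq : c != q by apply: contraTneq qc => ->; rewrite ltnn.
have [d' qd' d'c] := ancestor_child qc' cq.
exists d' => //; split=> //; rewrite ltnNge; apply/negP => le_dd'.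
have := preorder_range d'c; case: (eqVneq d' d) => [-> | ne_d]; first lia.
have lt_dd' : sibling_key d < sibling_key d'.
  by rewrite ltn_neqAle le_dd' andbT; apply: contra ne_d => /eqP/(sibling_key_inj qd qd') ->.
by have := preorder_sibling qd qd' lt_dd'; lia.
Qed.

Definition head : 'I_n -> 'I_n :=
  parent_rec root (fun v head_parent => if heavy_edge v then head_parent else v).

Lemma headE v : head v = if heavy_edge v then head (parent v) else v.
Proof. by rewrite /head parent_recE; case: eqVneq => // ->; rewrite /heavy_edge eqxx. Qed.

Lemma head_id v : ~~ heavy_edge v -> head v = v.
Proof. by rewrite headE => /negbTE ->. Qed.

Lemma head_ancestor v : ancestor (head v) v.
Proof.
elim/parent_ind: v => v IH; rewrite headE; case: ifP => [/andP [v_root _] | _].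
  exact: ancestor_trans (IH v_root) (ancestor_parent v).
exact: ancestor_refl.
Qed.

Lemma head_between w a : ancestor (head w) a -> ancestor a w -> head a = head w.
Proof.
elim/parent_ind: w a => w IH a; case: (eqVneq a w) => [-> // | aw].
rewrite headE; case: ifP => [/andP [w_root _] | _] hw_a a_w.
  by apply: (IH w_root a hw_a); apply: ancestor_parent_r; rewrite // eq_sym.
have daw : depth a = depth w by apply/eqP; rewrite eqn_leq (ancestor_depth a_w) (ancestor_depth hw_a).
by rewrite (ancestor_depth_eq a_w daw) eqxx in aw.
Qed.

Lemma head_depth_inj a b : head a = head b -> depth a = depth b -> a = b.
Proof.
have head_above v : heavy_edge v -> depth (head (parent v)) < depth v.
  case/andP=> v_root _; have := ancestor_depth (head_ancestor (parent v)).
  by rewrite depth_parent; have := depth_gt0 v_root; lia.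
elim/parent_ind: a b => a IH b; rewrite (headE a) (headE b).
case: (boolP (heavy_edge a)) => ha; case: (boolP (heavy_edge b)) => hb hab dab //.
- move: (ha) (hb) => /andP [a_root /eqP <-] /andP [_ /eqP <-].
  by rewrite (IH a_root (parent b)) // !depth_parent dab.
- by have := head_above a ha; rewrite hab dab ltnn.
- by have := head_above b hb; rewrite -hab -dab ltnn.
Qed.

Lemma same_head_ancestor a b : head a = head b -> depth a <= depth b -> ancestor a b.
Proof.
move=> hab dab; set a' := iter (depth b - depth a) parent b.
have a'b : ancestor a' b.
  by apply/ancestorP; rewrite depth_iter_parent; split; [lia | congr iter; lia].
have da' : depth a' = depth a by rewrite depth_iter_parent; lia.
suff -> : a = a' by [].
apply: head_depth_inj (esym da'); rewrite hab; apply/esym/(head_between _ a'b).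
have dh : depth (head b) <= depth a' by rewrite da' -hab; apply: ancestor_depth (head_ancestor a).
case/orP: (ancestor_total (head_ancestor b) a'b) => // a'_hb.
rewrite (ancestor_depth_eq a'_hb) ?ancestor_refl //.
by apply/eqP; rewrite eqn_leq dh ancestor_depth.
Qed.

Lemma same_head_heavy a b : head a = head b -> ancestor a b -> a != b -> ancestor (heavy a) b.
Proof.
move=> hab ab; rewrite eq_sym => ba; have [c ac cb] := ancestor_child ab ba.
have hc : head c = head b.
  apply: (head_between _ cb); rewrite -hab.
  exact: ancestor_trans (head_ancestor a) (child_ancestor ac).
have c_heavy : heavy_edge c.
  apply: contraT => c_light; move: hc; rewrite head_id // => hcb.
  by have := ancestor_depth (head_ancestor a); rewrite hab -hcb (child_depth ac); lia.
by move: c_heavy ac => /andP [_ /eqP hc'] /andP [_ /eqP pc]; rewrite -pc hc'.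
Qed.

Definition hanging (c x : 'I_n) : bool :=
  [&& x != root, heavy (parent x) != x & head (parent x) == c].

Lemma hanging_child c x : hanging c x -> child (parent x) x.
Proof. by case/and3P=> x_root _ _; apply: child_parent. Qed.

Lemma hanging_light c x : hanging c x -> x != heavy (parent x).
Proof. by case/and3P=> _ x_light _; rewrite eq_sym. Qed.

Lemma hanging_ancestor c x : hanging c x -> ancestor c (parent x).
Proof. by case/and3P=> _ _ /eqP <-; apply: head_ancestor. Qed.

Lemma hanging_head c x : hanging c x -> head x = x.
Proof. by case/and3P=> _ x_light _; rewrite head_id // /heavy_edge negb_and x_light orbT. Qed.

Lemma hanging_size c x : hanging c x -> 2 * subtree_size x < subtree_size c.
Proof.
move=> cx; have := light_child_size (hanging_child cx) (hanging_light cx).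
by have := subtree_size_le (hanging_ancestor cx); lia.
Qed.

Lemma hanging_golden_split1 c x : hanging c x -> golden_split (subtree_size x) 1 (subtree_size c).
Proof.
move=> cx; have := hanging_size cx; have := subtree_size_gt0 x => ? ?.
by apply/orP; left; apply/andP; split; lia.
Qed.

Lemma hanging_golden_split2 c x1 x2 : hanging c x1 -> hanging c x2 -> x1 != x2 ->
  golden_split (subtree_size x1) (subtree_size x2) (subtree_size c).
Proof.
wlog le_d : x1 x2 / depth (parent x1) <= depth (parent x2).
  move=> wlog_le cx1 cx2 x12; case: (leqP (depth (parent x1)) (depth (parent x2))) => [le|/ltnW le].
    exact: wlog_le.
  by rewrite golden_split_sym; apply: wlog_le => //; rewrite eq_sym.
move=> cx1 cx2 x12; have size_c := subtree_size_le (hanging_ancestor cx1).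
have p1x1 := hanging_child cx1; have p2x2 := hanging_child cx2.
have [p1h le_x1h] := heavy_spec p1x1; have [_ le_x2h] := heavy_spec p2x2.
have hp : head (parent x1) = head (parent x2).
  by case/and3P: cx1 cx2 => _ _ /eqP -> /and3P [_ _ /eqP ->].
have sizes1 := children_size_lt p1x1 p1h (hanging_light cx1).
have sizes2 := light_child_size p2x2 (hanging_light cx2).
case: (ltngtP (depth (parent x1)) (depth (parent x2))) le_d => // [lt_d | eq_d] _.
  have p1p2 := same_head_ancestor hp (ltnW lt_d).
  have p12 : parent x1 != parent x2 by apply: contraTneq lt_d => ->; rewrite ltnn.
  have := subtree_size_le (same_head_heavy hp p1p2 p12) => le_p2h.
  by apply/orP; left; apply/andP; split; lia.
have ep := head_depth_inj hp eq_d; rewrite -ep in le_x2h.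
have x2_light : x2 != heavy (parent x1) by rewrite ep; apply: hanging_light cx2.
have p1x2 : child (parent x1) x2 by rewrite ep.
have := @sum_children_size_lt (parent x1) (mem [:: x1; x2; heavy (parent x1)]).
rewrite -big_uniq /= ?inE ?negb_or ?x12 ?x2_light ?(hanging_light cx1) //.
rewrite !big_cons big_nil addn0 => /(_ _) three.
have {}three : subtree_size x1 + (subtree_size x2 + subtree_size (heavy (parent x1)))
  < subtree_size (parent x1) by apply: three => y; rewrite !inE => /or3P [] /eqP ->.
by apply/orP; left; apply/andP; split; lia.
Qed.

Lemma head_or_hanging c w : head c = c -> ancestor c w ->
  head w = c \/ exists2 x, hanging c x & ancestor x w.
Proof.
move=> hc; elim/parent_ind: w => w IH cw; case: (eqVneq w c) => [-> | wc]; first by left.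
have w_root := proper_descendant_neq_root cw wc.
case: (IH w_root (ancestor_parent_r cw wc)) => [hp | [x cx xp]]; last first.
  by right; exists x => //; apply: ancestor_trans xp (ancestor_parent w).
case: (boolP (heavy_edge w)) => [hw | w_light]; first by left; rewrite headE hw.
right; exists w; last exact: ancestor_refl.
by move: w_light; rewrite /hanging /heavy_edge w_root hp eqxx andbT.
Qed.

Section DirectedTree.
Variable E : rel 'I_n.
Hypothesis U_undirected : U =2 undirected E.
Hypothesis E_antisym : forall x y, E x y -> ~~ E y x.
Hypothesis E_card : #|[set p : 'I_n * 'I_n | E p.1 p.2]| = n.-1.

Definition parent_edge (v : 'I_n) : 'I_n * 'I_n :=
  if E (parent v) v then (parent v, v) else (v, parent v).

Lemma E_parent_edge v : v != root -> E (parent_edge v).1 (parent_edge v).2.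
Proof.
case/parent_spec=> + _; rewrite U_undirected /undirected /parent_edge.
by case: ifP => //= _ /orP [].
Qed.

Lemma parent_edge_inj : {in [set~ root] &, injective parent_edge}.
Proof.
move=> v w; rewrite !in_setC1 => v_root w_root.
have dv := depth_parent v; have dw := depth_parent w.
have := depth_gt0 v_root; have := depth_gt0 w_root.
by rewrite /parent_edge; case: ifP; case: ifP => _ _ ? ? [e1 e2] //;
  [move: dv dw; rewrite e1 -e2 | move: dv dw; rewrite -e1 e2]; lia.
Qed.

(* The n - 1 parent edges are edges of E, so by counting they are all of them. *)
Lemma edge_parent u v : E u v -> (v != root /\ parent v = u) \/ (u != root /\ parent u = v).
Proof.
move=> uv; set edges := [set p : 'I_n * 'I_n | E p.1 p.2].
have sub_edges : parent_edge @: [set~ root] \subset edges.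
  by apply/subsetP => e /imsetP [x]; rewrite in_setC1 => /E_parent_edge ? ->; rewrite inE.
have all_edges : parent_edge @: [set~ root] = edges.
  apply/eqP; rewrite eqEcard sub_edges card_in_imset ?cardsC1 ?card_ord ?E_card ?leqnn //.
  exact: parent_edge_inj.
have : (u, v) \in parent_edge @: [set~ root] by rewrite all_edges inE.
case/imsetP=> x; rewrite in_setC1 /parent_edge => x_root.
by case: ifP => _ [-> ->]; [left | right].
Qed.

Variable l : nat.
Hypothesis path_bound : forall x s, path E x s -> size s <= l.

Definition ends_path (v : 'I_n) (k : nat) : bool :=
  [exists x, [exists s : k.-tuple 'I_n, path E x s && (last x s == v)]].

Lemma ends_path_exists v : exists k, ends_path v k.
Proof. by exists 0; apply/existsP; exists v; apply/existsP; exists [tuple]; rewrite /= eqxx. Qed.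

Lemma ends_path_le v k : ends_path v k -> k <= l.
Proof. by case/existsP=> x /existsP [s /andP [/path_bound]]; rewrite size_tuple. Qed.

Definition height (v : 'I_n) : nat := ex_maxn (ends_path_exists v) (@ends_path_le v).

Lemma height_le v : height v <= l.
Proof. by rewrite /height; case: ex_maxnP => k /ends_path_le. Qed.

Lemma height_edge u v : E u v -> height u < height v.
Proof.
move=> uv; rewrite /height; case: ex_maxnP => k uk _; case: ex_maxnP => k' _ max_k'.
apply: max_k'; case/existsP: uk => x /existsP [s /andP [s_path /eqP s_last]].
apply/existsP; exists x.
have size_s : size (rcons s v) == k.+1 by rewrite size_rcons size_tuple.
by apply/existsP; exists (Tuple size_s); rewrite /= rcons_path s_path s_last uv last_rcons eqxx.
Qed.

(* [budget m] layers hold the subtree of a path head of size m. When a heavy path of size m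
   carries hanging subtrees of sizes a and b on its two sides, a^alpha + b^alpha <= m^alpha
   makes the two linear parts fit into one, and the constant -(l + 4), counted twice, pays for
   the height l of the path itself, the two separating layers and the two roundings. *)
Definition budget_real (m : nat) : R := ((INR l + 4) * (2 * Rpower (INR m) alpha - 1))%R.
Definition budget (m : nat) : Z := up (budget_real m).

Lemma budget_bounds m : (budget_real m < IZR (budget m) <= budget_real m + 1)%R.
Proof. by rewrite /budget; have [] := archimed (budget_real m); lra. Qed.

Lemma budget_real_ge m : 0 < m -> (INR l + 4 <= budget_real m)%R.
Proof.
move=> m_gt0; have : (1 <= Rpower (INR m) alpha)%R.
  rewrite -(Rpower_O (INR m)); last by apply/lt_0_INR/ltP.
  by apply: Rle_Rpower; [apply: (le_INR 1); apply/leP | have := alpha_bounds; lra].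
by rewrite /budget_real; have := pos_INR l; nra.
Qed.

Lemma budget_le a b : 0 < a -> a <= b -> (budget a <= budget b)%Z.
Proof.
move=> a_gt0 le_ab; have : (budget_real a <= budget_real b)%R.
  rewrite /budget_real; apply: Rmult_le_compat_l; first by have := pos_INR l; lra.
  suff : (Rpower (INR a) alpha <= Rpower (INR b) alpha)%R by lra.
  apply: Rle_Rpower_l; first by have := alpha_bounds; lra.
  by split; [apply/lt_0_INR/ltP | apply/le_INR/leP].
have := budget_bounds a; have := budget_bounds b => ? ? ?.
suff : (budget a - 1 < budget b)%Z by lia.
by apply: lt_IZR; rewrite minus_IZR; lra.
Qed.

Lemma budget_gt_l m : 0 < m -> (Z.of_nat l < budget m)%Z.
Proof.
move=> m_gt0; apply: lt_IZR; rewrite -INR_IZR_INZ.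
by have := budget_real_ge m_gt0; have := budget_bounds m; lra.
Qed.

Lemma budget_split a b m : 0 < a -> 0 < b -> golden_split a b m ->
  (Z.of_nat l + (1 + budget a) + (1 + budget b) < budget m)%Z.
Proof.
move=> a_gt0 b_gt0 split_abm; have := golden_split_Rpower a_gt0 b_gt0 split_abm.
have := budget_bounds a; have := budget_bounds b; have := budget_bounds m.
rewrite /budget_real => ? ? ? ?; apply: lt_IZR; rewrite !plus_IZR -INR_IZR_INZ.
by have := pos_INR l; nra.
Qed.

Definition room (m : nat) : Z := if m is 0 then 0 else 1 + budget m.

Lemma room_pos m : 0 < m -> room m = (1 + budget m)%Z.
Proof. by case: m. Qed.

Lemma room_le a b : a <= b -> (room a <= room b)%Z.
Proof.
rewrite /room; case: a b => [|a] [|b] le_ab //.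
- by have := @budget_gt_l b.+1 isT; lia.
- by have := @budget_le a.+1 b.+1 isT le_ab; lia.
Qed.

Definition up_hanging (c x : 'I_n) : bool := hanging c x && E (parent x) x.
Definition down_hanging (c x : 'I_n) : bool := hanging c x && E x (parent x).

Definition room_above (c : 'I_n) : Z :=
  Z.of_nat l + room (\max_(x | up_hanging c x) subtree_size x).
Definition room_below (c : 'I_n) : Z := room (\max_(x | down_hanging c x) subtree_size x).

Lemma rooms_lt_budget c : (room_above c + room_below c < budget (subtree_size c))%Z.
Proof.
have size_c := subtree_size_gt0 c.
have rooms_lt a b a' b' : 0 < a -> 0 < b -> golden_split a b (subtree_size c) ->
    a' <= a -> b' <= b -> (Z.of_nat l + room a' + room b' < budget (subtree_size c))%Z.
  move=> a_gt0 b_gt0 split_ab le_a le_b.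
  have := budget_split a_gt0 b_gt0 split_ab; rewrite -(room_pos a_gt0) -(room_pos b_gt0).
  by have := room_le le_a; have := room_le le_b; lia.
rewrite /room_above /room_below.
have [-> | [x1 up1 ->]] := bigmax_attained (up_hanging c) subtree_size;
  have [-> | [x2 down2 ->]] := bigmax_attained (down_hanging c) subtree_size.
- by have := budget_gt_l size_c; rewrite /=; lia.
- apply: (rooms_lt 1 (subtree_size x2)) => //; first exact: subtree_size_gt0.
  by rewrite golden_split_sym; apply: hanging_golden_split1 (proj1 (andP down2)).
- apply: (rooms_lt (subtree_size x1) 1) => //; first exact: subtree_size_gt0.
  exact: hanging_golden_split1 (proj1 (andP up1)).
- apply: (rooms_lt (subtree_size x1) (subtree_size x2)) => //; try exact: subtree_size_gt0.
  apply: hanging_golden_split2 (proj1 (andP up1)) (proj1 (andP down2)) _.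
  apply: contraTneq (proj2 (andP up1)) => ->; exact: E_antisym (proj2 (andP down2)).
Qed.

Lemma room_ge0 m : (0 <= room m)%Z.
Proof. exact: (@room_le 0). Qed.

Lemma room_max_ge (P : pred 'I_n) x :
  P x -> (1 + budget (subtree_size x) <= room (\max_(y | P y) subtree_size y))%Z.
Proof. by move=> Px; rewrite -(room_pos (subtree_size_gt0 x)); apply/room_le/leq_bigmax_cond. Qed.

Lemma room_max_le (P : pred 'I_n) : (room (\max_(y | P y) subtree_size y) <= room n)%Z.
Proof. by apply/room_le/bigmax_leqP => y _; apply: subtree_size_le_n. Qed.

(* Constant along heavy paths; the subtree of a light child [v] lies right above the layer of
   its parent if the edge points to [v], right below otherwise. *)
Definition offset : 'I_n -> Z := parent_rec 0%Z (fun v offset_parent =>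
  if heavy_edge v then offset_parent
  else if E (parent v) v then offset_parent + Z.of_nat (height (parent v)) + 1 + room_below v
  else offset_parent + Z.of_nat (height (parent v)) - 1 - room_above v)%Z.

Definition layer (v : 'I_n) : Z := (offset v + Z.of_nat (height v))%Z.

Lemma offsetE v : v != root -> offset v =
  if heavy_edge v then offset (parent v)
  else if E (parent v) v then (layer (parent v) + 1 + room_below v)%Z
  else (layer (parent v) - 1 - room_above v)%Z.
Proof. by move=> v_root; rewrite /offset parent_recE (negbTE v_root) /layer. Qed.

Lemma offset_heavy_path c w : ancestor c w -> head w = c -> offset w = offset c.
Proof.
elim/parent_ind: w => w IH cw hw; case: (eqVneq w c) => [-> // | wc].
have w_heavy : heavy_edge w by apply: contraT => /head_id w_head; rewrite -w_head hw eqxx in wc.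
have w_root := proper_descendant_neq_root cw wc.
rewrite offsetE // w_heavy; apply: IH => //; first exact: ancestor_parent_r.
by rewrite -hw [RHS]headE w_heavy.
Qed.

Lemma hanging_offset c x : hanging c x -> offset x =
  if E (parent x) x then (layer (parent x) + 1 + room_below x)%Z
  else (layer (parent x) - 1 - room_above x)%Z.
Proof.
move=> cx; have [x_root x_light _] := and3P cx.
by rewrite offsetE // /heavy_edge x_root (negbTE x_light).
Qed.

Lemma hanging_layer_parent c x : hanging c x -> head c = c ->
  (offset c <= layer (parent x) <= offset c + Z.of_nat l)%Z.
Proof.
move=> cx hc; have [_ _ /eqP hp] := and3P cx.
rewrite /layer (offset_heavy_path (hanging_ancestor cx) hp); have := height_le (parent x); lia.
Qed.

Lemma room_above_ge c : (Z.of_nat l <= room_above c)%Z.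
Proof. by have := @room_ge0 (\max_(x | up_hanging c x) subtree_size x); rewrite /room_above; lia. Qed.

Lemma room_below_ge0 c : (0 <= room_below c)%Z.
Proof. exact: room_ge0. Qed.

Lemma room_above_hanging c x : up_hanging c x ->
  (Z.of_nat l + 1 + budget (subtree_size x) <= room_above c)%Z.
Proof. by move/room_max_ge; rewrite /room_above; lia. Qed.

Lemma room_below_hanging c x : down_hanging c x -> (1 + budget (subtree_size x) <= room_below c)%Z.
Proof. exact: room_max_ge. Qed.

Lemma parent_edge_down v : v != root -> ~~ E (parent v) v -> E v (parent v).
Proof. by case/parent_spec; rewrite U_undirected => /orP [-> | ->]. Qed.

Lemma subtree_layers c w : head c = c -> ancestor c w ->
  (offset c - room_below c <= layer w <= offset c + room_above c)%Z.
Proof.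
move: {2}(subtree_size c) (leqnn (subtree_size c)) => k.
elim: k c w => [|k IHk] c w size_c hc cw; first by have := subtree_size_gt0 c; lia.
have := @room_below_ge0 c; have := @room_above_ge c.
case: (head_or_hanging hc cw) => [hw | [x cx xw]] ? ?.
  by rewrite /layer (offset_heavy_path cw hw); have := height_le w; lia.
have size_x : subtree_size x <= k by have := hanging_size cx; lia.
have := IHk x w size_x (hanging_head cx) xw; have := rooms_lt_budget x.
have := hanging_layer_parent cx hc; rewrite (hanging_offset cx).
have [x_root _ _] := and3P cx.
case: ifP => [up | /negbT/(parent_edge_down x_root) down] ? ? ?.
- by have := @room_above_hanging c x; rewrite /up_hanging cx up => /(_ isT); lia.
- by have := @room_below_hanging c x; rewrite /down_hanging cx down => /(_ isT); lia.
Qed.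

Lemma layer_edge u v : E u v -> (layer u < layer v)%Z.
Proof.
move=> uv; have := height_edge uv; have := height_le u.
case: (edge_parent uv) => [[v_root pv] | [u_root pu]].
- rewrite [layer v]/layer (offsetE v_root) pv uv; have := @room_below_ge0 v.
  by case: heavy_edge; rewrite /layer; lia.
- rewrite [layer u]/layer (offsetE u_root) pu (negbTE (E_antisym uv)); have := @room_above_ge u.
  by case: heavy_edge; rewrite /layer; lia.
Qed.

Lemma light_subtree_side q c : child q c -> c != heavy q ->
  (forall w, ancestor c w -> (layer q < layer w)%Z) \/
  (forall w, ancestor c w -> (layer w < layer q)%Z).
Proof.
move=> /andP [c_root /eqP qc] c_light.
have c_not_heavy : heavy_edge c = false.
  by rewrite /heavy_edge qc [heavy q == c]eq_sym (negbTE c_light) andbF.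
have c_head : head c = c by rewrite head_id // c_not_heavy.
have := @room_below_ge0 c; have := @room_above_ge c.
have := offsetE c_root; rewrite c_not_heavy qc.
by case: ifP => _ offset_c ? ?; [left | right] => w cw;
  have := subtree_layers c_head cw; rewrite offset_c; lia.
Qed.

Lemma n_gt0 : 0 < n.
Proof. exact: leq_ltn_trans (leq0n root) (ltn_ord root). Qed.

Lemma layer_span_le u v : E u v -> (layer v - layer u <= Z.of_nat l + 1 + room n)%Z.
Proof.
move=> uv; have := height_le u; have := height_le v; have := @room_ge0 n.
have := @room_max_le (down_hanging v); have := @room_max_le (up_hanging u).
rewrite -/(room_below v) => ? ? ? ? ?.
case: (edge_parent uv) => [[v_root pv] | [u_root pu]].
- by rewrite /layer (offsetE v_root) pv uv; case: heavy_edge; rewrite /layer; lia.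
- rewrite /layer (offsetE u_root) pu (negbTE (E_antisym uv)).
  by case: heavy_edge; rewrite /layer /room_above; lia.
Qed.

Lemma layer_span u v : E u v ->
  (IZR (layer v - layer u) <= 2 * (INR l + 4) * Rpower (INR n) alpha)%R.
Proof.
move=> uv; apply: Rle_trans (IZR_le _ _ (layer_span_le uv)) _.
rewrite (room_pos n_gt0) !plus_IZR -INR_IZR_INZ.
by have := budget_bounds n; rewrite /budget_real; lra.
Qed.

Section Drawing.
Local Open Scope R_scope.

Definition xpos (v : 'I_n) : R := INR (preorder v).

Lemma xpos_lt a b : (preorder a < preorder b)%N -> xpos a + 1 <= xpos b.
Proof. by move=> lt_ab; rewrite /xpos -S_INR; apply/le_INR/leP. Qed.

Lemma xpos_inj : injective xpos.
Proof. by move=> a b /INR_eq/preorder_inj. Qed.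

Lemma xpos_neq_half a b : xpos a <> xpos b - 1 / 2.
Proof.
rewrite /xpos => eq_ab; have : INR (2 * preorder a + 1) = INR (2 * preorder b).
  by rewrite plus_INR !mult_INR [INR 2]/= [INR 1]/=; lra.
by move/INR_eq; lia.
Qed.

(* [tent z = max 0 (1 - |z|)], written so that [reg] proves continuity. *)
Definition tent (z : R) : R := ((1 - Rabs z) + Rabs (1 - Rabs z)) / 2.

Lemma tent_out z : 1 <= Rabs z -> tent z = 0.
Proof. by move=> z_ge1; rewrite /tent (Rabs_left1 (1 - _)); lra. Qed.

Lemma tent_in z : Rabs z <= 1 -> tent z = 1 - Rabs z.
Proof. by move=> z_le1; rewrite /tent (Rabs_right (1 - _)); lra. Qed.

Lemma tent0 : tent 0 = 1.
Proof. by rewrite tent_in Rabs_R0; lra. Qed.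

Lemma tent_IZR_neq0 z : z <> 0%Z -> tent (IZR z) = 0.
Proof. by move=> z0; rewrite tent_out // -abs_IZR; apply: IZR_le; lia. Qed.

Lemma tent_interpolate (k m : Z) t : IZR k <= t <= IZR k + 1 ->
  tent (t - IZR m) = (IZR k + 1 - t) * tent (IZR k - IZR m) + (t - IZR k) * tent (IZR (k + 1) - IZR m).
Proof.
move=> t_k; rewrite -!minus_IZR.
have [km | km] := Z.eq_dec k m.
  subst m; rewrite Z.sub_diag tent0 tent_IZR_neq0; last lia.
  by rewrite tent_in Rabs_right; lra.
have [k1m | k1m] := Z.eq_dec (k + 1) m.
  rewrite -k1m Z.sub_diag tent0 tent_IZR_neq0; last lia.
  by rewrite plus_IZR tent_in Rabs_left1; lra.
rewrite !tent_IZR_neq0; try lia; rewrite tent_out; first lra.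
case: (Z_le_gt_dec (k + 2) m) => [le_km | lt_mk].
  by have := IZR_le _ _ le_km; rewrite plus_IZR => ?; rewrite Rabs_left1; lra.
have : (m + 1 <= k)%Z by lia.
by move/IZR_le; rewrite plus_IZR => ?; rewrite Rabs_right; lra.
Qed.

(* The drawing of the edge between [c] and its parent [p] as a function of the height: at
   [layer p] it is at [xpos p], at [layer c] at [xpos c], at every other integer height at
   [xpos c - 1/2], and it is linear in between. *)
Definition edge_x (p c : 'I_n) (t : R) : R :=
  xpos c - 1 / 2 + 1 / 2 * tent (t - IZR (layer c))
  + (xpos p - xpos c + 1 / 2) * tent (t - IZR (layer p)).

Lemma edge_x_interpolate p c (k : Z) t : IZR k <= t <= IZR k + 1 ->
  edge_x p c t = (IZR k + 1 - t) * edge_x p c (IZR k) + (t - IZR k) * edge_x p c (IZR (k + 1)).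
Proof.
move=> t_k; rewrite /edge_x (tent_interpolate (layer c) t_k) (tent_interpolate (layer p) t_k).
by rewrite plus_IZR; ring.
Qed.

Lemma layer_parent_neq c : c != root -> layer (parent c) <> layer c.
Proof. by move=> /parent_spec [+ _]; rewrite U_undirected => /orP [] /layer_edge; lia. Qed.

Lemma edge_x_parent c : c != root -> edge_x (parent c) c (IZR (layer (parent c))) = xpos (parent c).
Proof.
move=> c_root; rewrite /edge_x -!minus_IZR Z.sub_diag tent0 tent_IZR_neq0; first lra.
by have := layer_parent_neq c_root; lia.
Qed.

Lemma edge_x_child c : c != root -> edge_x (parent c) c (IZR (layer c)) = xpos c.
Proof.
move=> c_root; rewrite /edge_x -!minus_IZR Z.sub_diag tent0 tent_IZR_neq0; first lra.
by have := layer_parent_neq c_root; lia.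
Qed.

Lemma edge_x_elsewhere c j : j <> layer (parent c) -> j <> layer c ->
  edge_x (parent c) c (IZR j) = xpos c - 1 / 2.
Proof. by move=> jp jc; rewrite /edge_x -!minus_IZR !tent_IZR_neq0; try lia; lra. Qed.

Lemma edge_x_at_vertex c j : c != root ->
  (exists2 a, a = parent c \/ a = c & j = layer a /\ edge_x (parent c) c (IZR j) = xpos a) \/
  edge_x (parent c) c (IZR j) = xpos c - 1 / 2.
Proof.
move=> c_root; have [-> | jp] := Z.eq_dec j (layer (parent c)).
  by left; exists (parent c); [left | rewrite edge_x_parent].
have [-> | jc] := Z.eq_dec j (layer c); last by right; apply: edge_x_elsewhere.
by left; exists c; [right | rewrite edge_x_child].
Qed.

Lemma edge_x_le_xpos c j : c != root -> edge_x (parent c) c (IZR j) <= xpos c.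
Proof.
move=> c_root; have := xpos_lt (preorder_child_lt (child_parent c_root)).
by case: (edge_x_at_vertex j c_root) => [[a [-> | ->] [_ ->]] | ->]; lra.
Qed.

Definition spans (c : 'I_n) (j : Z) : Prop :=
  (Z.min (layer (parent c)) (layer c) <= j <= Z.max (layer (parent c)) (layer c))%Z.

(* If [preorder q < preorder c < preorder d], then [c] lies in the subtree of a sibling of [d]
   visited earlier, which is light since heavy children are visited last. That subtree lies
   strictly on one side of the layer of [q], so the only edge of it reaching this layer is the
   one from the sibling to [q]. *)
Lemma edge_x_at_parent_layer c q d : c != root -> child q d -> (preorder c < preorder d)%N ->
  spans c (layer q) -> edge_x (parent c) c (IZR (layer q)) <= xpos q.
Proof.
move=> c_root qd lt_cd c_spans; have le_c := edge_x_le_xpos (layer q) c_root.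
case: (ltngtP (preorder c) (preorder q)) => [lt_cq | lt_qc | /preorder_inj eq_cq].
- by have := xpos_lt lt_cq; lra.
- have [d' qd' [d'c lt_key]] := preorder_between qd (introT andP (conj lt_qc lt_cd)).
  case: (eqVneq c d') => [-> | cd'].
    by case/andP: qd' => d'_root /eqP <-; rewrite edge_x_parent //; lra.
  have d'_light : d' != heavy q.
    apply: contraTneq lt_key => ->; rewrite -leqNgt; case: (eqVneq d (heavy q)) => [-> // | dh].
    exact/ltnW/sibling_key_heavy.
  have d'p := ancestor_parent_r d'c cd'.
  by move: c_spans; rewrite /spans; case: (light_subtree_side qd' d'_light) => side;
    have := side _ d'c; have := side _ d'p; lia.
- by rewrite -eq_cq edge_x_child //; lra.
Qed.

Lemma edge_x_order c d j : c != root -> d != root -> (preorder c < preorder d)%N ->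
  spans c j -> spans d j ->
  edge_x (parent c) c (IZR j) <= edge_x (parent d) d (IZR j) /\
  (edge_x (parent c) c (IZR j) = edge_x (parent d) d (IZR j) -> j = layer (parent d)).
Proof.
move=> c_root d_root lt_cd c_spans d_spans; have le_c := edge_x_le_xpos j c_root.
have := xpos_lt lt_cd; have [jp | jd] := Z.eq_dec j (layer (parent d)) => lt_x.
  subst j; rewrite edge_x_parent //; split=> //.
  exact: edge_x_at_parent_layer c_root (child_parent d_root) lt_cd c_spans.
have x_d : xpos d - 1 / 2 <= edge_x (parent d) d (IZR j).
  by case: (edge_x_at_vertex j d_root) => [[a [a_p | ->] [ja ->]] | ->]; [rewrite a_p in ja | lra | lra].
by split=> [|eq_x]; lra.
Qed.

Lemma edges_disjoint_between c d (k : Z) t : c != root -> d != root -> c != d ->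
  IZR k < t < IZR k + 1 -> spans c k -> spans c (k + 1) -> spans d k -> spans d (k + 1) ->
  edge_x (parent c) c t <> edge_x (parent d) d t.
Proof.
wlog lt_cd : c d / (preorder c < preorder d)%N.
  move=> wlog_lt c_root d_root cd t_k c_k c_k1 d_k d_k1.
  have : preorder c != preorder d by apply: contra cd => /eqP/preorder_inj ->.
  rewrite neq_ltn => /orP [lt | lt]; first exact: wlog_lt.
  by move/esym; apply: wlog_lt => //; rewrite eq_sym.
move=> c_root d_root _ t_k c_k c_k1 d_k d_k1.
rewrite (@edge_x_interpolate (parent c) c k) 1?(@edge_x_interpolate (parent d) d k); try lra.
have [le_k eq_k] := edge_x_order c_root d_root lt_cd c_k d_k.
have [le_k1 eq_k1] := edge_x_order c_root d_root lt_cd c_k1 d_k1.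
case: (Rle_lt_or_eq_dec _ _ le_k) => [lt_k | /eq_k ek]; first nra.
case: (Rle_lt_or_eq_dec _ _ le_k1) => [lt_k1 | /eq_k1 ek1]; first nra.
by move: ek1; rewrite -ek; lia.
Qed.

Definition edge_child (u v : 'I_n) : 'I_n := if (v != root) && (parent v == u) then v else u.

Lemma edge_childP u v : E u v -> edge_child u v != root /\
  (edge_child u v = v /\ parent v = u \/ edge_child u v = u /\ parent u = v).
Proof.
move=> uv; rewrite /edge_child; case: ifP => [/andP [v_root /eqP pv] | not_pv].
  by split=> //; left.
case: (edge_parent uv) => [[v_root pv] | [u_root pu]]; last by split=> //; right.
by rewrite v_root pv eqxx in not_pv.
Qed.

Lemma edge_child_spans u v j : E u v -> spans (edge_child u v) j <-> (layer u <= j <= layer v)%Z.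
Proof.
move=> uv; have := layer_edge uv; rewrite /spans.
by case: (edge_childP uv) => _ [[-> ->] | [-> ->]]; lia.
Qed.

Lemma edge_child_endpoint u v a : E u v ->
  a = parent (edge_child u v) \/ a = edge_child u v -> a = u \/ a = v.
Proof. by move=> uv; case: (edge_childP uv) => _ [[-> ->] | [-> ->]] [] ->; auto. Qed.

Lemma edge_child_inj u v u' v' :
  E u v -> E u' v' -> edge_child u v = edge_child u' v' -> (u, v) = (u', v').
Proof.
move=> uv u'v'; have [_ c1] := edge_childP uv; have [_ c2] := edge_childP u'v'.
case: c1 => [[-> pv] | [-> pu]]; case: c2 => [[-> pv'] | [-> pu']] eq_c; subst.
- by [].
- by have := E_antisym uv; rewrite u'v'.
- by have := E_antisym uv; rewrite u'v'.
- by [].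
Qed.

Definition curve_y (u v : 'I_n) (t : R) : R := IZR (layer u) + t * (IZR (layer v) - IZR (layer u)).
Definition curve_x (u v : 'I_n) (t : R) : R :=
  edge_x (parent (edge_child u v)) (edge_child u v) (curve_y u v t).

Lemma on_curve_edge_x u v P : E u v -> on_curve (curve_x u v) (curve_y u v) P ->
  IZR (layer u) <= P.2 <= IZR (layer v) /\ P.1 = edge_x (parent (edge_child u v)) (edge_child u v) P.2.
Proof.
move=> uv [t [t01 [<- <-]]]; split=> //.
by have := IZR_lt _ _ (layer_edge uv); rewrite /curve_y; nra.
Qed.

Lemma curve_endpoints u v : E u v ->
  curve_x u v 0 = xpos u /\ curve_y u v 0 = IZR (layer u) /\
  curve_x u v 1 = xpos v /\ curve_y u v 1 = IZR (layer v).
Proof.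
move=> uv; have := layer_edge uv; rewrite /curve_x /curve_y Rmult_0_l Rmult_1_l Rplus_0_r.
rewrite (_ : IZR (layer u) + (IZR (layer v) - IZR (layer u)) = IZR (layer v)); last ring.
case: (edge_childP uv) => c_root [[ec pv] | [ec pu]]; rewrite ec in c_root * => _.
- by rewrite -pv edge_x_parent // edge_x_child.
- by rewrite -pu edge_x_parent // edge_x_child.
Qed.

Lemma curve_avoids_vertices u v w : E u v -> w <> u -> w <> v ->
  ~ on_curve (curve_x u v) (curve_y u v) (xpos w, IZR (layer w)).
Proof.
move=> uv wu wv /(on_curve_edge_x uv) [_ /= x_w]; have [c_root _] := edge_childP uv.
case: (edge_x_at_vertex (layer w) c_root) => [[a a_end [_ x_a]] | x_half]; rewrite ?x_a ?x_half in x_w.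
  by case: (edge_child_endpoint uv a_end) => a_uv; rewrite a_uv in x_w; move/xpos_inj: x_w.
exact: xpos_neq_half x_w.
Qed.

Lemma edges_meet_at_level c d j : c != root -> d != root -> c != d ->
  edge_x (parent c) c (IZR j) = edge_x (parent d) d (IZR j) ->
  exists a, [/\ a = parent c \/ a = c, a = parent d \/ a = d, j = layer a
    & edge_x (parent c) c (IZR j) = xpos a].
Proof.
move=> c_root d_root cd eq_x.
case: (edge_x_at_vertex j c_root) => [[a ac [ja xa]] | xc];
  case: (edge_x_at_vertex j d_root) => [[b bd [jb xb]] | xd].
- have ab : a = b by apply: xpos_inj; rewrite -xa -xb.
  by exists a; split=> //; rewrite ab.
- by have := @xpos_neq_half a d; rewrite -xa -xd.
- by have := @xpos_neq_half b c; rewrite -xb -xc eq_x.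
- by exfalso; move/eqP: cd; apply; apply: xpos_inj; lra.
Qed.

Lemma curves_meet_at_endpoints u v u' v' : E u v -> E u' v' -> (u, v) <> (u', v') ->
  forall P, on_curve (curve_x u v) (curve_y u v) P -> on_curve (curve_x u' v') (curve_y u' v') P ->
  exists w, (w = u \/ w = v) /\ (w = u' \/ w = v') /\ P = (xpos w, IZR (layer w)).
Proof.
move=> uv u'v' ne [px py] on1 on2.
have [/= [lo1 hi1] x1] := on_curve_edge_x uv on1; have [/= [lo2 hi2] x2] := on_curve_edge_x u'v' on2.
have [c_root _] := edge_childP uv; have [d_root _] := edge_childP u'v'.
have cd : edge_child u v != edge_child u' v' by apply/eqP => /(edge_child_inj uv u'v').
have [k_le k_gt] := base_Int_part py; set k := Int_part py in k_le k_gt.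
case: (Req_dec (IZR k) py) => [eq_k | ne_k].
  rewrite -eq_k in x1 x2.
  have [a [ac ad ka xa]] := edges_meet_at_level c_root d_root cd (etrans (esym x1) x2).
  exists a; split; first exact: edge_child_endpoint uv ac.
  by split; [exact: edge_child_endpoint u'v' ad | rewrite x1 xa -eq_k ka].
have py_k : IZR k < py < IZR k + 1.
  by split; [case: (Rle_lt_or_eq_dec _ _ k_le) | lra].
have spans_k a b : E a b -> IZR (layer a) <= py <= IZR (layer b) ->
    spans (edge_child a b) k /\ spans (edge_child a b) (k + 1).
  move=> ab [lo hi]; rewrite !(edge_child_spans _ ab).
  have : (layer a < k + 1)%Z by apply: lt_IZR; rewrite plus_IZR; lra.
  have : (k < layer b)%Z by apply: lt_IZR; lra.
  lia.
have [c_k c_k1] := spans_k _ _ uv (conj lo1 hi1); have [d_k d_k1] := spans_k _ _ u'v' (conj lo2 hi2).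
by exfalso; apply: (edges_disjoint_between c_root d_root cd py_k c_k c_k1 d_k d_k1); rewrite -x1 -x2.
Qed.

Lemma drawing_ok : upward_planar_layered_drawing E xpos layer curve_x curve_y.
Proof.
split; [by move=> u v [/xpos_inj] | split; [|split]].
- move=> u v uv; have [x0 [y0 [x1 y1]]] := curve_endpoints uv.
  have lt_uv := IZR_lt _ _ (layer_edge uv).
  split; first by rewrite /curve_x /edge_x /tent /curve_y; reg.
  split; first by rewrite /curve_y; reg.
  by do 4 split=> //; move=> s t *; rewrite /curve_y; nra.
- exact: curve_avoids_vertices.
- exact: curves_meet_at_endpoints.
Qed.

End Drawing.
End DirectedTree.
End RootedTree.

Theorem mainTheorem10 :
  exists c : R, (0 < c)%R /\
  forall (n : nat) (E : rel 'I_n) (l : nat),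
    directed_tree E -> longest_path_length E l -> 1 <= l ->
    exists (X : 'I_n -> R) (Y : 'I_n -> Z) (gx gy : 'I_n -> 'I_n -> R -> R),
      upward_planar_layered_drawing E X Y gx gy /\
      drawing_span_le E Y
        (c * INR l * Rpower (INR n) (ln golden_ratio / ln 2))%R.
Proof.
exists 10%R; split; first lra.
move=> n E l [n_gt0 [_ [E_antisym [E_connected E_card]]]] [_ path_bound] l_ge1.
have connected v : connect (undirected E) (Ordinal n_gt0) v by apply: E_connected.
have U_undirected : undirected E =2 undirected E by [].
exists (xpos connected), (layer connected path_bound),
  (curve_x connected path_bound), (curve_y connected path_bound).
split; first exact: drawing_ok.
move=> u v uv; apply: Rle_trans (layer_span connected U_undirected E_antisym E_card path_bound uv) _.
have p_gt0 : (0 < Rpower (INR n) alpha)%R by apply: exp_pos.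
have : (1 <= INR l)%R by apply: (le_INR 1); apply/leP.
rewrite -[(ln golden_ratio / ln 2)%R]/alpha; nra.
Qed.
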